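(* Let $K$ be a field, $1 \le d \le n$, $N \ge n+d$, and let $I = (S_N.\,e_n^d(x_1,\dots,x_n)) \subseteq K[x_1,\dots,x_N]$. If $\mathrm{char}(K) \nmid \binom{n}{d}$, then $$\sqrt{I} = (S_N.\,x_1\cdots x_d).$$ Moreover, if $\mathrm{char}(K) \mid \binom{n}{d}$, then for any $N \ge n$ the ideal $\sqrt{(S_N.\,e_n^d(x_1,\dots,x_n))}\subseteq K[x_1,\dots,x_N]$ contains no monomial.
   Context: $e_n^d(x_1,\dots,x_n)$ denotes the elementary symmetric polynomial of degree $d$ in $x_1,\dots,x_n$. $S_N$ acts on $K[x_1,\dots,x_N]$ by permuting variables; $(S_N.g)$ denotes the ideal generated by the $S_N$-orbit of $g$. *)

From HB Require Import structures.
From mathcomp Require Import all_boot all_order all_algebra all_fingroup.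
From mathcomp Require Import mpoly.
Set Implicit Arguments. Unset Strict Implicit. Unset Printing Implicit Defensive.
Import GRing.Theory.
Local Open Scope ring_scope.

Section Defs.
Variables (K : fieldType) (N : nat).
Local Notation P := {mpoly K[N]}.

Definition in_ideal (G : P -> Prop) (p : P) : Prop :=
  exists cs : seq (P * P),
    (forall cg, cg \in cs -> G cg.2) /\ p = \sum_(cg <- cs) cg.1 * cg.2.

Definition in_radical (G : P -> Prop) (p : P) : Prop :=
  exists k : nat, in_ideal G (p ^+ k).

Definition SN_orbit (g : P) : P -> Prop :=
  fun q => exists s : 'S_N, q = msym s g.

(* e_n^d(x_1, ..., x_n) inside K[x_1, ..., x_N] (variables indexed from 0) *)
Definition esym_first (n d : nat) : P :=
  \sum_(h : {set 'I_N} | (h \subset [set i : 'I_N | (i < n)%N]) && (#|h| == d))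
    \prod_(i in h) 'X_i.

Definition prod_first (d : nat) : P :=
  \prod_(i : 'I_N | (i < d)%N) 'X_i.

Definition is_monomial (p : P) : Prop := exists m : 'X_{1..N}, p = 'X_[m].

End Defs.

(* Write I = (S_N . e_d(x_1, ..., x_n)) and J = (S_N . x_1 ... x_d).
   The orbit of e_d(x_1..x_n) is the set of the e_d(S), S an n-subset of
   the variables, and the orbit of x_1 ... x_d is the set of squarefree
   monomials x_D with |D| = d.
   - sqrt I is contained in J: each e_d(S) is a sum of monomials x_D, and J is
     radical, being the ideal of polynomials all of whose monomials involve
     at least d variables.
   - J is contained in sqrt I (when C(n, d) is nonzero in K and N >= n + d):
     otherwise Krull's prime avoidance (via Zorn's lemma) gives a prime ideal
     P containing I and missing some x_D.  A descending induction on a window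
     of indices k for which e_k(T) lies in P, trading pairs of variables that
     differ modulo P, reaches either e_0 = 1, or a block of variables all
     congruent modulo P: congruent to 0 contradicts x_D outside P, congruent
     to a unit forces C(n, d) into P.
   - If C(n, d) = 0 in K, evaluation at (1, ..., 1) kills I but no monomial. *)

From HB Require Import structures.
From mathcomp Require Import all_boot all_order all_algebra all_fingroup.
From mathcomp Require Import mpoly.
From mathcomp Require Import ring zify.
From mathcomp Require classical_sets.
From Stdlib Require Import Classical_Prop.
Set Implicit Arguments. Unset Strict Implicit. Unset Printing Implicit Defensive.
Import GRing.Theory.
Local Open Scope ring_scope.

Section Ideals.
Variable R : comNzRingType.

Definition ideal_of (G : R -> Prop) (p : R) : Prop :=
  exists cs : seq (R * R),
    (forall cg, cg \in cs -> G cg.2) /\ p = \sum_(cg <- cs) cg.1 * cg.2.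

Record is_ideal (A : R -> Prop) : Prop := IsIdeal {
  ideal0 : A 0;
  idealD : forall x y, A x -> A y -> A (x + y);
  idealM : forall r x, A x -> A (r * x) }.

Variable A : R -> Prop.
Hypothesis idA : is_ideal A.

Lemma idealN x : A x -> A (- x).
Proof. by move=> Ax; rewrite -mulN1r; apply: (idealM idA). Qed.

Lemma idealB x y : A x -> A y -> A (x - y).
Proof. by move=> Ax Ay; apply: (idealD idA) => //; apply: idealN. Qed.

Lemma idealM_right r x : A x -> A (x * r).
Proof. by move=> Ax; rewrite mulrC; apply: (idealM idA). Qed.

Lemma ideal_sum (I : Type) (r : seq I) (P : pred I) (F : I -> R) :
  (forall i, P i -> A (F i)) -> A (\sum_(i <- r | P i) F i).
Proof.
by move=> AF; apply: (big_ind A); [exact: (ideal0 idA) | exact: (idealD idA) |].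
Qed.

Lemma ideal_of_min G : (forall g, G g -> A g) -> forall x, ideal_of G x -> A x.
Proof.
move=> GA x [cs [Gcs ->]]; rewrite big_seq; apply: ideal_sum => cg /Gcs Gc.
by apply: (idealM idA); apply: GA.
Qed.

End Ideals.

Lemma ideal_of_ideal (R : comNzRingType) (G : R -> Prop) : is_ideal (ideal_of G).
Proof.
split.
- by exists [::]; split => //; rewrite big_nil.
- move=> x y [cs [Gcs ->]] [ds [Gds ->]]; exists (cs ++ ds); split.
    by move=> cg; rewrite mem_cat => /orP [/Gcs|/Gds].
  by rewrite big_cat.
- move=> r x [cs [Gcs ->]]; exists [seq (r * cg.1, cg.2) | cg <- cs]; split.
    by move=> cg /mapP [cg' /Gcs Gcg' ->].
  by rewrite big_map big_distrr /=; apply: eq_bigr => cg _; rewrite mulrA.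
Qed.

Lemma ideal_of_gen (R : comNzRingType) (G : R -> Prop) g : G g -> ideal_of G g.
Proof.
move=> Gg; exists [:: (1, g)]; split; last by rewrite big_seq1 mul1r.
by move=> cg; rewrite inE => /eqP ->.
Qed.

(* Krull's prime avoidance: if no power of p lies in the ideal generated by
   G, some prime ideal contains G but not p.  The prime ideal is a maximal
   element, obtained by Zorn's lemma, of the ideals containing G and no power
   of p. *)
Section PrimeAvoidance.
Variables (R : comNzRingType) (G : R -> Prop) (p : R).

Definition avoiding (A : R -> Prop) : Prop :=
  [/\ is_ideal A, forall g, G g -> A g & forall k, ~ A (p ^+ k)].

(* The union of a chain of ideals, each empty or avoiding, and one of which
   is nonempty, is avoiding (empty members arise from Zorn's empty chain). *)
Lemma avoiding_chain_union (F : (R -> Prop) -> Prop) X0 x0 :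
  (forall X, F X -> (forall x, ~ X x) \/ avoiding X) -> F X0 -> X0 x0 ->
  (forall X Y, F X -> F Y -> (forall x, X x -> Y x) \/ (forall x, Y x -> X x)) ->
  avoiding (fun x => exists2 X, F X & X x).
Proof.
move=> Fav FX0 X0x0 Ftot.
have avF X x : F X -> X x -> avoiding X by move=> /Fav [/(_ x)|].
have [idX0 GX0 _] := avF _ _ FX0 X0x0.
split; [split | |].
- by exists X0 => //; apply: ideal0.
- move=> x y [X FX Xx] [Y FY Yy].
  have [[idX _ _] [idY _ _]] := (avF _ _ FX Xx, avF _ _ FY Yy).
  case: (Ftot _ _ FX FY) => [XY|YX].
  + by exists Y => //; apply: idealD => //; apply: XY.
  + by exists X => //; apply: idealD => //; apply: YX.
- move=> r x [X FX Xx]; have [idX _ _] := avF _ _ FX Xx.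
  by exists X => //; apply: idealM.
- by move=> g Gg; exists X0 => //; apply: GX0.
- by move=> k [X FX Xk]; have [_ _ /(_ k)] := avF _ _ FX Xk.
Qed.

Lemma maximal_avoiding_prime A : avoiding A ->
  (forall B, avoiding B -> (forall x, A x -> B x) -> forall x, B x -> A x) ->
  forall a b, A (a * b) -> A a \/ A b.
Proof.
move=> [idA GA nA] maxA a b Aab.
case: (classic (A a)) => [|nAa]; first by left.
case: (classic (A b)) => [|nAb]; first by right.
(* Ac c is the ideal A + (c); by maximality it contains a power of p
   whenever c is not in A. *)
pose Ac c x := exists y r, A y /\ x = y + r * c.
have Ac_ideal c : is_ideal (Ac c).
  split.
  - by exists 0, 0; rewrite mul0r addr0; split => //; apply: ideal0.
  - move=> x y [y1 [r1 [Ay1 ->]]] [y2 [r2 [Ay2 ->]]].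
    exists (y1 + y2), (r1 + r2); split; first exact: idealD.
    by rewrite mulrDl addrACA.
  - move=> r x [y1 [r1 [Ay1 ->]]]; exists (r * y1), (r * r1); split.
      exact: idealM.
    by rewrite mulrDr mulrA.
have Ac_pow c : ~ A c -> exists k, Ac c (p ^+ k).
  move=> nAc; apply: NNPP => nk; apply: nAc.
  have AcA : forall x, Ac c x -> A x.
    apply: maxA; last by move=> x Ax; exists x, 0; rewrite mul0r addr0.
    split; [exact: Ac_ideal | | by move=> k Ack; apply: nk; exists k].
    by move=> g Gg; exists g, 0; rewrite mul0r addr0; split => //; apply: GA.
  by apply: AcA; exists 0, 1; rewrite add0r mul1r; split => //; apply: ideal0.
have [k [y1 [r1 [Ay1 E1]]]] := Ac_pow a nAa.
have [l [y2 [r2 [Ay2 E2]]]] := Ac_pow b nAb.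
exfalso; apply: (nA (k + l)%N); rewrite exprD E1 E2.
have -> : (y1 + r1 * a) * (y2 + r2 * b) =
    y1 * (y2 + r2 * b) + (r1 * a) * y2 + (r1 * r2) * (a * b) by ring.
apply: (idealD idA); first apply: (idealD idA).
- exact: (idealM_right idA).
- exact: (idealM idA).
- exact: (idealM idA).
Qed.

Lemma prime_avoidance : (forall k, ~ ideal_of G (p ^+ k)) ->
  exists A : R -> Prop, [/\ is_ideal A, (forall g, G g -> A g), ~ A p, ~ A 1
     & forall a b, A (a * b) -> A a \/ A b].
Proof.
move=> nGp.
(* Zorn's lemma on the avoiding ideals together with the empty set, so that
   the empty chain has an upper bound; the maximal element is not empty,
   since the avoiding ideal [ideal_of G] is not contained in it. *)
pose fam X := (forall x, ~ X x) \/ avoiding X.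
have [|A [famA maxA]] := @classical_sets.Zorn_bigcup R fam.
  move=> F Ffam Ftot.
  case: (classic (exists X, F X /\ exists x, X x)) => [[X0 [FX0 [x0 X0x0]]]|nF].
    by right; exact: (@avoiding_chain_union F X0 x0 Ffam FX0 X0x0 Ftot).
  by left=> x [X FX Xx]; apply: nF; exists X; split => //; exists x.
have famG : fam (ideal_of G).
  by right; split; [exact: ideal_of_ideal | exact: ideal_of_gen | exact: nGp].
case: famA => [A0 | avA].
  exfalso; apply: (maxA (ideal_of G)) => //; split; first by move=> x /A0.
  by move=> /(_ 0 (ideal0 (ideal_of_ideal G))) /A0.
have [idA GA nA] := avA.
exists A; split => //.
- by move=> Ap; apply: (nA 1%N); rewrite expr1.
- by move=> A1; apply: (nA 0%N); rewrite expr0.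
apply: maximal_avoiding_prime => // B avB AB x Bx.
apply: NNPP => nAx; apply: (maxA B); last by right.
by split => // /(_ x Bx).
Qed.

End PrimeAvoidance.

Section ElementarySubsums.
Variables (R : comNzRingType) (L : nat) (v : 'I_L -> R).

Definition esub k (T : {set 'I_L}) : R :=
  \sum_(A : {set 'I_L} | (A \subset T) && (#|A| == k)) \prod_(i in A) v i.

Lemma esub0 T : esub 0 T = 1.
Proof.
rewrite /esub (big_pred1 set0) ?big_set0 // => A /=.
by rewrite cards_eq0 andb_idl // => /eqP ->; exact: sub0set.
Qed.

Lemma esubS_set0 k : esub k.+1 set0 = 0.
Proof.
rewrite /esub big_pred0 // => A; rewrite subset0.
by apply/negP => /andP [/eqP -> /eqP]; rewrite cards0.
Qed.

Lemma esub_card (T : {set 'I_L}) : esub #|T| T = \prod_(i in T) v i.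
Proof.
rewrite /esub (big_pred1 T) // => A /=.
rewrite eqEcard; case: (boolP (A \subset T)) => //= sAT.
by rewrite eqn_leq subset_leq_card.
Qed.

Lemma esubU1 k (a : 'I_L) (T : {set 'I_L}) : a \notin T ->
  esub k.+1 (a |: T) = esub k.+1 T + v a * esub k T.
Proof.
move=> aT; rewrite /esub (bigID (fun A : {set 'I_L} => a \in A)) /= addrC.
congr (_ + _).
  apply: eq_bigl => A; case aA: (a \in A) => /=; rewrite ?andbF ?andbT.
    apply/esym/negbTE/negP => /andP [/subsetP /(_ a aA) aT' _].
    by rewrite aT' in aT.
  congr (_ && _); apply/idP/idP => /subsetP sA; apply/subsetP => x xA.
    by have := sA x xA; rewrite !inE => /orP [/eqP xa|//]; rewrite xa aA in xA.
  by rewrite !inE sA ?orbT.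
rewrite big_distrr /= (reindex_onto (fun B => a |: B) (fun A => A :\ a)) /=;
  last by move=> A /andP [_ aA]; rewrite setD1K.
apply: eq_big => B; last first.
  by move=> /andP [_ /eqP <-]; rewrite big_setU1 // !inE eqxx.
apply/idP/idP.
  move=> /andP [/andP [/andP [sub cB] _] /eqP eB].
  have aB : a \notin B by rewrite -eB !inE eqxx.
  rewrite -eB setU1K // in sub cB *.
  rewrite cardsU1 aB /= add1n eqSS in cB; rewrite cB andbT.
  apply/subsetP => x xB; have := subsetP sub x; rewrite !inE xB orbT => /(_ isT).
  by case/orP => // /eqP xa; rewrite -xa xB in aB.
move=> /andP [sub /eqP cB].
have aB : a \notin B by apply/negP => /(subsetP sub); rewrite (negbTE aT).
rewrite setU1K // eqxx setU11 cardsU1 aB cB eqxx !andbT /=.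
by apply/subsetP => x; rewrite !inE => /orP [->|/(subsetP sub) ->]; rewrite ?orbT.
Qed.

End ElementarySubsums.

Lemma ex_subset (T : finType) (W : {set T}) m : (m <= #|W|)%N ->
  exists X : {set T}, X \subset W /\ #|X| = m.
Proof.
elim: m => [|m IH] hm; first by exists set0; rewrite sub0set cards0.
have [X [sXW cX]] := IH (ltnW hm).
have : (0 < #|W :\: X|)%N by rewrite cardsDS // cX subn_gt0.
rewrite card_gt0 => /set0Pn [x]; rewrite inE => /andP [xX xW].
exists (x |: X); split; first by rewrite subUset sub1set xW.
by rewrite cardsU1 xX cX.
Qed.

Lemma set_pick (T : finType) (X : {set T}) m : #|X| = m.+1 ->
  exists a Y, [/\ X = a |: Y, a \notin Y & #|Y| = m].
Proof.
move=> cX; have : (0 < #|X|)%N by rewrite cX.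
rewrite card_gt0 => /set0Pn [a aX]; exists a, (X :\ a); split.
- by rewrite setD1K.
- by rewrite !inE eqxx.
- by move: cX; rewrite (cardsD1 a) aX add1n => [[]].
Qed.

Section EsubModIdeal.
Variables (R : comNzRingType) (L : nat) (v : 'I_L -> R).
Variables (P : R -> Prop) (idealP : is_ideal P).
Local Notation esub := (esub v).

Lemma esub_mod_const (W : {set 'I_L}) (g : R) :
  (forall w, w \in W -> P (v w - g)) ->
  forall T : {set 'I_L}, T \subset W -> forall k, P (esub k T - 'C(#|T|, k)%:R * g ^+ k).
Proof.
move=> vW T; move Hm: #|T| => m; elim: m T Hm => [|m IH] T cT sTW k.
  move/eqP: cT; rewrite cards_eq0 => /eqP ->.
  case: k => [|k]; first by rewrite esub0 bin0 expr0 mulr1 subrr; exact: ideal0.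
  by rewrite esubS_set0 bin0n mul0r subrr; exact: ideal0.
have [a [Y [ET aY cY]]] := set_pick cT; subst T.
have sYW := subset_trans (subsetUr [set a] Y) sTW.
have aW : a \in W by apply: (subsetP sTW); rewrite setU11.
case: k => [|k]; first by rewrite esub0 bin0 expr0 mulr1 subrr; exact: ideal0.
rewrite esubU1 // binS natrD.
have -> : esub k.+1 Y + v a * esub k Y - ('C(m, k.+1)%:R + 'C(m, k)%:R) * g ^+ k.+1
  = (esub k.+1 Y - 'C(m, k.+1)%:R * g ^+ k.+1)
    + v a * (esub k Y - 'C(m, k)%:R * g ^+ k) + (v a - g) * ('C(m, k)%:R * g ^+ k).
  by rewrite exprS; ring.
apply: (idealD idealP); first apply: (idealD idealP).
- exact: IH.
- by apply: (idealM idealP); apply: IH.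
- by apply: (idealM_right idealP); apply: vW.
Qed.

Lemma esub_mod_zero (T X : {set 'I_L}) :
  (forall w, w \in X -> P (v w)) -> [disjoint T & X] ->
  forall k, P (esub k (T :|: X) - esub k T).
Proof.
move=> vX; move Hm: #|X| => m; elim: m X Hm vX => [|m IH] X cX vX dTX k.
  move/eqP: cX; rewrite cards_eq0 => /eqP ->; rewrite setU0 subrr; exact: ideal0.
have [a [Y [EX aY cY]]] := set_pick cX.
have aX : a \in X by rewrite EX setU11.
have vY w : w \in Y -> P (v w) by move=> wY; apply: vX; rewrite EX inE wY orbT.
have dTY : [disjoint T & Y] by apply: disjointWr dTX; rewrite EX subsetUr.
have aTY : a \notin T :|: Y.
  rewrite inE negb_or aY andbT; apply/negP => aT.
  by move: dTX; rewrite disjoint_sym => /disjointFr /(_ aX); rewrite aT.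
case: k => [|k]; first by rewrite !esub0 subrr; exact: ideal0.
rewrite EX setUCA esubU1 //.
have -> : esub k.+1 (T :|: Y) + v a * esub k (T :|: Y) - esub k.+1 T =
  (esub k.+1 (T :|: Y) - esub k.+1 T) + v a * esub k (T :|: Y) by ring.
by apply: (idealD idealP); [exact: IH | apply: (idealM_right idealP); apply: vX].
Qed.

(* Pascal's rule propagates membership of binomial coefficients in P:
   if C(m, k) lies in P for d - j <= k <= d, then so does C(m + j, d). *)
Lemma binomial_window m d j : (j <= d)%N ->
  (forall k, (d - j <= k <= d)%N -> P 'C(m, k)%:R) -> P 'C(m + j, d)%:R.
Proof.
move=> jd Cm; suff Ci i : (i <= j)%N -> forall k, (d - j + i <= k <= d)%N ->
    P 'C(m + i, k)%:R by apply: Ci; lia.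
elim: i => [|i IH] ij k hk; first by rewrite addn0; apply: Cm; lia.
have -> : k = k.-1.+1 by lia.
by rewrite addnS binS natrD; apply: (idealD idealP); apply: IH; lia.
Qed.

End EsubModIdeal.

Section PrimeCombinatorics.
Variables (R : comNzRingType) (L : nat) (v : 'I_L -> R).
Variables (P : R -> Prop) (idealP : is_ideal P).
Hypotheses (primeP : forall a b, P (a * b) -> P a \/ P b) (nP1 : ~ P 1).
Variables (n d : nat).
Hypothesis le_dn : (d <= n)%N.
Local Notation esub := (esub v).

Lemma prime_expN a k : ~ P a -> ~ P (a ^+ k).
Proof.
move=> nPa; elim: k => [|k IH]; first by rewrite expr0.
by rewrite exprS => /primeP [].
Qed.

(* [window W j]: for every T inside W of size n - j, the functions e_k(T)
   with d - j <= k <= d all lie in P.  The hypothesis on the e_d(S) says that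
   [window setT 0] holds; the argument trades two points of W for one more
   step of the window, until the window reaches e_0 = 1. *)
Definition window (W : {set 'I_L}) (j : nat) : Prop :=
  forall T : {set 'I_L}, T \subset W -> #|T| = (n - j)%N ->
  forall k, (d - j <= k <= d)%N -> P (esub k T).

(* A window of width d contains e_0 = 1. *)
Lemma window_top (W : {set 'I_L}) : (n - d <= #|W|)%N -> ~ window W d.
Proof.
move=> leW wW; have [T [sTW cT]] := ex_subset leW.
by apply: nP1; rewrite -(esub0 v T); apply: wW; rewrite ?subnn.
Qed.

(* If v a and v b differ modulo P, removing a and b widens the window:
   e_(k+1)(T + a) - e_(k+1)(T + b) = (v a - v b) e_k(T). *)
Lemma window_shrink (W : {set 'I_L}) j a b : (j < d)%N -> a \in W -> b \in W ->
  ~ P (v a - v b) -> window W j -> window (W :\ a :\ b) j.+1.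
Proof.
move=> jd aW bW nPab wW T sT cT k hk.
have sW : W :\ a :\ b \subset W by apply/subsetP => x; rewrite !inE => /and3P [].
have [aT bT] : a \notin T /\ b \notin T.
  by split; apply/negP => /(subsetP sT); rewrite !inE eqxx ?andbF.
have window_step k' : (d - j <= k'.+1 <= d)%N -> P (esub k' T) /\ P (esub k'.+1 T).
  move=> hk'.
  have wU c : c \in W -> c \notin T -> P (esub k'.+1 T + v c * esub k' T).
    move=> cW cT'; rewrite -esubU1 //; apply: wW => //.
      by rewrite subUset sub1set cW (subset_trans sT sW).
    by rewrite cardsU1 cT' cT; lia.
  have Pdiff : P ((v a - v b) * esub k' T).
    have -> : (v a - v b) * esub k' T =
      (esub k'.+1 T + v a * esub k' T) - (esub k'.+1 T + v b * esub k' T) by ring.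
    by apply: (idealB idealP); apply: wU.
  have Pk' : P (esub k' T) by case: (primeP Pdiff).
  split => //.
  have -> : esub k'.+1 T = (esub k'.+1 T + v a * esub k' T) - v a * esub k' T by ring.
  by apply: (idealB idealP); [apply: wU | apply: (idealM idealP)].
have [kd|dk] := ltnP k d; first by have [] := window_step k ltac:(lia).
have -> : k = d.-1.+1 by lia.
by have [] := window_step d.-1 ltac:(lia).
Qed.

Variable D : {set 'I_L}.
Hypotheses (cardD : #|D| = d) (nPD : ~ P (\prod_(i in D) v i)).
Hypothesis PS : forall S : {set 'I_L}, #|S| = n -> P (esub d S).

(* If v vanishes modulo P on n - d points, these points extend D to a set S
   of size n with e_d(S) = prod_(i in D) v i modulo P: a contradiction. *)
Lemma zero_block_contra (W : {set 'I_L}) : (n - d <= #|W|)%N ->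
  (forall w, w \in W -> P (v w)) -> False.
Proof.
move=> leW vW; have [X [sXW cX]] := ex_subset leW.
have dDX : [disjoint D & X].
  apply/pred0P => i /=; apply/negP => /andP [iD /(subsetP sXW) /vW Pi].
  by apply: nPD; rewrite (big_setD1 i) //=; apply: (idealM_right idealP).
have cDX : #|D :|: X| = n by rewrite cardsU (disjoint_setI0 dDX) cards0; lia.
apply: nPD; rewrite -esub_card cardD.
have -> : esub d D = esub d (D :|: X) - (esub d (D :|: X) - esub d D) by ring.
apply: (idealB idealP); first exact: PS.
by apply: esub_mod_zero => // w /(subsetP sXW) /vW.
Qed.

(* If v is constant modulo P on W, equal to some g outside P, then e_k(T)
   equals C(n - j, k) g^k modulo P, so the window puts C(n - j, k) in P for
   d - j <= k <= d; by Pascal's rule C(n, d) lies in P. *)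
Lemma window_const (W : {set 'I_L}) j g : (j <= d)%N -> (n - j <= #|W|)%N ->
  (forall w, w \in W -> P (v w - g)) -> ~ P g -> window W j -> P 'C(n, d)%:R.
Proof.
move=> jd leW vW nPg wW; have [T [sTW cT]] := ex_subset leW.
have -> : n = (n - j + j)%N by lia.
apply: (binomial_window idealP) => // k hk.
have Pcg : P ('C(n - j, k)%:R * g ^+ k).
  have := esub_mod_const idealP vW sTW k; rewrite cT => Pdiff.
  have -> : 'C(n - j, k)%:R * g ^+ k =
    esub k T - (esub k T - 'C(n - j, k)%:R * g ^+ k) by ring.
  by apply: (idealB idealP) => //; apply: wW.
by case: (primeP Pcg) => // /(prime_expN nPg).
Qed.

Hypothesis nPC : ~ P 'C(n, d)%:R.

(* No window of width j <= d exists on a large enough W, by induction on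
   d - j: two values differing modulo P allow [window_shrink]; otherwise v
   is constant modulo P on W and [zero_block_contra] or [window_const]
   applies. *)
Lemma window_contra i j (W : {set 'I_L}) :
  (j + i = d)%N -> (n + d <= #|W| + 2 * j)%N -> ~ window W j.
Proof.
elim: i j W => [|i IH] j W jid leW wW.
  by rewrite addn0 in jid; subst j; apply: (window_top _ wW); lia.
case: (classic (exists a b, [/\ a \in W, b \in W & ~ P (v a - v b)])).
  move=> [a [b [aW bW nPab]]].
  have ab : a != b.
    by apply: contra_notN nPab => /eqP ->; rewrite subrr; exact: (ideal0 idealP).
  have bWa : b \in W :\ a by rewrite !inE eq_sym ab.
  have cW : #|W| = (#|W :\ a :\ b| + 2)%N.
    by move: (cardsD1 a W) (cardsD1 b (W :\ a)); rewrite aW bWa; lia.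
  apply: (IH j.+1 (W :\ a :\ b)); [lia | lia |].
  by apply: window_shrink => //; lia.
move=> nEx; have : (0 < #|W|)%N by lia.
rewrite card_gt0 => /set0Pn [w0 w0W].
have vW w : w \in W -> P (v w - v w0).
  by move=> wW'; apply: NNPP => nP; apply: nEx; exists w, w0.
case: (classic (P (v w0))) => [Pw0 | nPw0].
  apply: (zero_block_contra (W := W)); first lia.
  move=> w /vW Pw; have -> : v w = (v w - v w0) + v w0 by ring.
  exact: (idealD idealP).
by apply: nPC; apply: (window_const (W := W) (j := j) (g := v w0)) => //; lia.
Qed.

(* The hypothesis on the e_d(S) is [window setT 0]. *)
Lemma prime_esub_contra : (n + d <= L)%N -> False.
Proof.
move=> leL; apply: (window_contra (i := d) (j := 0%N) (W := setT)) => //.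
  by rewrite cardsT card_ord; lia.
move=> T _; rewrite subn0 => cT k; rewrite subn0 => hk.
have -> : k = d by lia.
exact: PS.
Qed.

End PrimeCombinatorics.

Lemma imset_subsetE (aT rT : finType) (f : aT -> rT) (A B : {set aT}) :
  injective f -> (f @: A \subset f @: B) = (A \subset B).
Proof.
move=> injf; apply/idP/idP; last exact: imsetS.
move=> /subsetP sAB; apply/subsetP => x xA.
by have /imsetP [y yB /injf ->] := sAB _ (imset_f f xA).
Qed.

(* The symmetric group acts transitively on subsets of a given size: map
   A - a onto B - b by induction, then send the image of a to b by a
   transposition fixing B - b. *)
Lemma perm_transport (T : finType) (A B : {set T}) : #|A| = #|B| ->
  exists s : {perm T}, s @: A = B.
Proof.
move Hm : #|A| => m; elim: m A B Hm => [|m IH] A B cA cB.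
  exists 1%g; move/eqP: cA; move/esym/eqP: cB; rewrite !cards_eq0 => /eqP -> /eqP ->.
  exact: imset0.
have [a [A' [-> aA' cA']]] := set_pick cA.
have [b [B' [-> bB' cB']]] := set_pick (esym cB).
have [s sA'] := IH A' B' cA' (esym cB').
have saB' : s a \notin B' by rewrite -sA' mem_imset //; exact: perm_inj.
exists (s * tperm (s a) b)%g.
rewrite (eq_imset (g := tperm (s a) b \o s)); last by move=> x; rewrite permM.
rewrite imset_comp imsetU1 sA' imsetU1 tpermL; congr (_ |: _).
rewrite -[RHS]imset_id; apply: eq_in_imset => y yB'.
by rewrite tpermD //; apply/eqP => eq_y; [move: saB' | move: bB']; rewrite eq_y yB'.
Qed.

Section Orbits.
Variables (K : fieldType) (N : nat).
Local Notation MP := {mpoly K[N]}.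

Definition Xv (i : 'I_N) : MP := 'X_i.

Definition lowset m : {set 'I_N} := [set i : 'I_N | (i < m)%N].

Lemma card_lowset m : (m <= N)%N -> #|lowset m| = m.
Proof.
move=> mN; have -> : lowset m = [set widen_ord mN i | i : 'I_m].
  apply/setP => x; rewrite inE; apply/idP/imsetP => [xm|[i _ ->] /=].
    by exists (Ordinal xm) => //; apply/val_inj.
  exact: ltn_ord.
by rewrite card_imset ?card_ord // => x y /(congr1 val) /= /val_inj.
Qed.

Lemma msym_prod (s : 'S_N) (T : {set 'I_N}) :
  msym s (\prod_(i in T) Xv i) = \prod_(i in s @: T) Xv i.
Proof.
rewrite rmorph_prod big_imset /=; last by move=> x y _ _; exact: perm_inj.
by apply: eq_bigr => i _; rewrite /Xv /msym mmapX mmap1U.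
Qed.

Lemma msym_esub (s : 'S_N) k (T : {set 'I_N}) :
  msym s (esub Xv k T) = esub Xv k (s @: T).
Proof.
rewrite /esub rmorph_sum /= [RHS](reindex_inj (imset_inj (@perm_inj _ s))) /=.
apply: eq_big => A; last by move=> _; exact: msym_prod.
by rewrite card_imset ?imset_subsetE //; exact: perm_inj.
Qed.

Lemma orbit_esymE n d (g : MP) : (n <= N)%N ->
  SN_orbit (esym_first K N n d) g <->
  exists2 S : {set 'I_N}, #|S| = n & g = esub Xv d S.
Proof.
move=> nN; split => [[s ->]|[S cS ->]].
  exists (s @: lowset n); last by rewrite msym_esub.
  by rewrite card_imset ?card_lowset //; exact: perm_inj.
have [s sS] := @perm_transport _ (lowset n) S (etrans (card_lowset nN) (esym cS)).
by exists s; rewrite msym_esub sS.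
Qed.

Lemma orbit_prodE d (g : MP) : (d <= N)%N ->
  SN_orbit (prod_first K N d) g <->
  exists2 D : {set 'I_N}, #|D| = d & g = \prod_(i in D) Xv i.
Proof.
have prodE : prod_first K N d = \prod_(i in lowset d) Xv i.
  by apply: eq_bigl => i; rewrite inE.
move=> dN; split => [[s ->]|[D cD ->]].
  exists (s @: lowset d); last by rewrite prodE msym_prod.
  by rewrite card_imset ?card_lowset //; exact: perm_inj.
have [s sD] := @perm_transport _ (lowset d) D (etrans (card_lowset dN) (esym cD)).
by exists s; rewrite prodE msym_prod sD.
Qed.

End Orbits.

Lemma kernel_ideal (R S : comNzRingType) (f : {rmorphism R -> S}) :
  is_ideal (fun x => f x = 0).
Proof.
split; first exact: rmorph0.
  by move=> x y fx fy; rewrite rmorphD fx fy addr0.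
by move=> r x fx; rewrite rmorphM fx mulr0.
Qed.

(* The monomial ideal J = (S_N . x_1 ... x_d) consists of the polynomials all
   of whose monomials involve at least d variables; this description shows
   that J is radical. *)
Section MonomialIdeal.
Variables (K : fieldType) (N d : nat).
Hypothesis le_dN : (d <= N)%N.
Local Notation MP := {mpoly K[N]}.
Local Notation J := (in_ideal (SN_orbit (prod_first K N d))).

Definition mnm_supp (m : 'X_{1..N}) : {set 'I_N} := [set i | m i != 0%N].

Definition small (m : 'X_{1..N}) : bool := (#|mnm_supp m| < d)%N.

Lemma prodX_mesym1 (D : {set 'I_N}) : \prod_(i in D) Xv K i = 'X_[mesym1 D].
Proof.
rewrite mpolyXE_id big_mkcond /=; apply: eq_bigr => i _.
by rewrite mnmE; case: (i \in D); rewrite ?expr1 ?expr0.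
Qed.

Lemma coefM_mesym1 (c : MP) (D : {set 'I_N}) m : ~~ (D \subset mnm_supp m) ->
  (c * 'X_[mesym1 D])@_m = 0.
Proof.
move=> nDm; rewrite {1}(mpolyE c) mulr_suml raddf_sum /=.
apply: big1_seq => m' _; rewrite -scalerAl -mpolyXD mcoeffZ mcoeffX.
case: eqP => [Em|]; last by rewrite mulr0.
case/negP: nDm; apply/subsetP => i iD.
by rewrite inE -Em mnmDE mnmE iD addn1.
Qed.

Lemma J_coef (q : MP) m : J q -> small m -> q@_m = 0.
Proof.
move=> [cs [Jcs ->]] sm; rewrite raddf_sum /=; apply: big1_seq => cg /andP [_ cg_cs].
have [D cD ->] := (orbit_prodE _ le_dN).1 (Jcs _ cg_cs).
rewrite prodX_mesym1 coefM_mesym1 //; apply: contraTN sm => /subset_leq_card.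
by rewrite cD -leqNgt.
Qed.

Lemma term_in_J (c : K) m : ~~ small m -> J (c *: 'X_[m]).
Proof.
rewrite -leqNgt => big_m; have [D [sD cD]] := ex_subset big_m.
have le_Dm : (mesym1 D <= m)%MM.
  apply/mnm_lepP => i; rewrite mnmE; case iD: (i \in D) => //.
  by have := subsetP sD i iD; rewrite inE lt0n.
rewrite -(submK le_Dm) mpolyXD scalerAl -prodX_mesym1.
apply: (idealM (ideal_of_ideal _)); apply: ideal_of_gen.
by apply/orbit_prodE => //; exists D.
Qed.

Definition small_part (q : MP) : MP :=
  \sum_(m <- msupp q | small m) q@_m *: 'X_[m].

Lemma small_part_big (q : MP) m : ~~ small m -> (small_part q)@_m = 0.
Proof.
move=> big_m; rewrite raddf_sum /=; apply: big1 => m' sm'.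
rewrite mcoeffZ mcoeffX; case: eqP => [Em|]; last by rewrite mulr0.
by move: big_m; rewrite -Em sm'.
Qed.

Lemma J_sub_small_part (q : MP) : J (q - small_part q).
Proof.
rewrite {1}(mpolyE q) (bigID small) /= -/(small_part q) addrAC subrr add0r.
by apply: (ideal_sum (ideal_of_ideal _)) => m; apply: term_in_J.
Qed.

(* J is radical: if q is not in J, its small part q1 is nonzero, and the
   leading coefficient of q1^k sits at a small monomial, contradicting
   q^k = q1^k (mod J). *)
Lemma J_radical (q : MP) k : J (q ^+ k) -> J q.
Proof.
move=> Jqk; apply: NNPP => nJq.
have idJ := ideal_of_ideal (SN_orbit (prod_first K N d)).
set q1 := small_part q.
have q1_neq0 : q1 != 0.
  apply: contra_notN nJq => /eqP q1_0.
  by have := J_sub_small_part q; rewrite -/q1 q1_0 subr0.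
have Jq1k : J (q1 ^+ k).
  have -> : q1 ^+ k = q ^+ k - (q - q1) * \sum_(i < k) q ^+ (k.-1 - i) * q1 ^+ i.
    by rewrite -subrXX; ring.
  by apply: (idealB idJ) => //; apply: (idealM_right idJ); exact: J_sub_small_part.
have small_lead : small (mlead q1).
  apply: contraNT q1_neq0 => big_lead.
  by rewrite -mleadc_eq0 small_part_big.
have small_lead_k : small (mlead q1 *+ k)%MM.
  apply: leq_ltn_trans small_lead; apply: subset_leq_card.
  by apply/subsetP => i; rewrite !inE mulmnE; apply: contra => /eqP ->; rewrite mul0n.
move: (J_coef Jq1k small_lead_k); rewrite mleadcX => /eqP.
by rewrite expf_eq0 mleadc_eq0 (negbTE q1_neq0) andbF.
Qed.

End MonomialIdeal.

Section Radical.
Variables (K : fieldType) (N n d : nat).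
Local Notation MP := {mpoly K[N]}.
Local Notation I := (SN_orbit (esym_first K N n d)).
Local Notation J := (in_ideal (SN_orbit (prod_first K N d))).

(* The radical of I is contained in J: each e_d(S) is a sum of products of
   d variables, and J is radical. *)
Lemma radical_sub_J (p : MP) : (d <= n <= N)%N -> in_radical I p -> J p.
Proof.
move=> /andP [dn nN] [k Ipk]; have dN : (d <= N)%N by lia.
apply: (J_radical dN (k := k)); apply: (ideal_of_min (ideal_of_ideal _) _ Ipk).
move=> _ /(orbit_esymE _ _ nN) [S _ ->].
apply: (ideal_sum (ideal_of_ideal _)) => D /andP [_ /eqP cD].
by apply: ideal_of_gen; apply/orbit_prodE => //; exists D.
Qed.

(* J is contained in the radical of I: otherwise a prime ideal containing I
   avoids p, hence some x_D, which is impossible by [prime_esub_contra]. *)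
Lemma J_sub_radical (p : MP) : (d <= n)%N -> (n + d <= N)%N ->
  'C(n, d)%:R != 0 :> K -> J p -> in_radical I p.
Proof.
move=> dn leN nC Jp; apply: NNPP => nIp.
have [|Pr [idPr IPr nPrp nPr1 primePr]] := @prime_avoidance _ I p.
  by move=> k Ipk; apply: nIp; exists k.
have [dN nN] : (d <= N)%N /\ (n <= N)%N by lia.
have [g Jg nPrg] : exists2 g, SN_orbit (prod_first K N d) g & ~ Pr g.
  apply: NNPP => allP; apply: nPrp; apply: (ideal_of_min idPr _ Jp) => g Jg.
  by apply: NNPP => nPrg; apply: allP; exists g.
have [D cD gE] := (orbit_prodE _ dN).1 Jg; subst g.
apply: (prime_esub_contra idPr primePr nPr1 dn cD nPrg _ _ leN).
- by move=> S cS; apply: IPr; apply/(orbit_esymE _ _ nN); exists S.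
- move=> PrC; apply: nPr1.
  have -> : (1 : MP) = (('C(n, d)%:R : K)^-1)%:MP * 'C(n, d)%:R.
    by rewrite -(rmorph_nat (@mpolyC N K)) -rmorphM mulVf // rmorph1.
  exact: (idealM idPr).
Qed.

(* When C(n, d) = 0 in K, evaluation at (1, ..., 1) kills every e_d(S) with
   |S| = n, whose value is C(n, d), but no power of a monomial. *)
Lemma radical_no_monomial (p : MP) : (n <= N)%N -> 'C(n, d)%:R = 0 :> K ->
  is_monomial p -> ~ in_radical I p.
Proof.
move=> nN C0 [m ->] [k Ipk].
pose ev1 := meval (fun _ : 'I_N => 1 : K).
have ker_ev1 := kernel_ideal ev1.
have ev1_gen g : I g -> ev1 g = 0.
  move=> /(orbit_esymE _ _ nN) [S cS ->].
  have := esub_mod_const ker_ev1 (W := S) (g := 1) (v := @Xv K N) _ (subxx S) d.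
  rewrite cS /= rmorphB rmorphM rmorph_nat C0 mul0r subr0; apply=> w _.
  by rewrite rmorphB /= mevalXU rmorph1 subrr.
have := ideal_of_min ker_ev1 ev1_gen Ipk.
rewrite rmorphXn /= mevalX big1 ?expr1n => [/eqP|i _]; last exact: expr1n.
by rewrite oner_eq0.
Qed.

End Radical.

Theorem proposition2p1 (K : fieldType) (n d : nat) :
  (1 <= d <= n)%N ->
  (forall N : nat, (n + d <= N)%N ->
     ('C(n, d))%:R != 0 :> K ->
     forall p : {mpoly K[N]},
       in_radical (SN_orbit (@esym_first K N n d)) p <->
       in_ideal (SN_orbit (@prod_first K N d)) p)
  /\
  (forall N : nat, (n <= N)%N ->
     ('C(n, d))%:R = 0 :> K ->
     forall p : {mpoly K[N]},
       is_monomial p -> ~ in_radical (SN_orbit (@esym_first K N n d)) p).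
Proof.
move=> /andP [_ dn]; split=> [N leN nC p | N nN C0 p]; last first.
  exact: radical_no_monomial.
split; first by apply: radical_sub_J; rewrite dn; lia.
exact: J_sub_radical.
Qed.
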